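(* For every $t\in\mathbb Q_{\ge0}\cup\{\infty\}$, there exist a word $w$ and a letter $\alpha\in\{x,y,z\}$ such that $\omega_t=w\alpha w^{-1}$ (as words).
   Context: Modified lattice: the planar graph with vertex set $\mathbb Z^2$ whose edges are the horizontal unit segments $[(i,j),(i+1,j)]$, the vertical unit segments $[(i,j),(i,j+1)]$, and the diagonal segments of slope $-1$ joining $(i,j+1)$ and $(i+1,j)$. Words $\omega_t$: set $\omega_{0/1}=x$, $\omega_{1/0}=z$ ($\frac10$ represents $\infty$). For a reduced fraction $t=p/q\in(0,\infty)$, let $L_t$ be the segment from $(0,0)$ to $(q,p)$, oriented from $(0,0)$ to $(q,p)$. List the edges of the modified lattice whose relative interior meets $L_t$, in the order of the intersection points along $L_t$. A horizontal (resp. diagonal, vertical) edge contributes the letter $x$ (resp. $y$, $z$) if the midpoint of the edge is not on the right-hand side of the oriented segment $L_t$ (including the case that the midpoint lies on $L_t$), and contributes $x^{-1}$ (resp. $y^{-1}$, $z^{-1}$) if the midpoint is on the right-hand side. The word $\omega_t$ is the concatenation of these letters in order. *)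

From mathcomp Require Import all_boot all_order all_algebra.
Set Implicit Arguments. Unset Strict Implicit. Unset Printing Implicit Defensive.
Import Order.TTheory GRing.Theory Num.Theory.
Local Open Scope ring_scope.

(* Generators x, y, z; a letter is a generator with an exponent sign
   (true = exponent +1, false = exponent -1); a word is a finite sequence
   of letters (NOT reduced). *)
Inductive gen := gx | gy | gz.
Definition letter := (gen * bool)%type.
Definition word := seq letter.
Definition inv_letter (a : letter) : letter := (a.1, ~~ a.2).
Definition inv_word (w : word) : word := rev (map inv_letter w).

(* The oriented segment L is from (0,0) to (Q,P).  A point (mx,my) is on
   the right-hand side of L iff Q*my - P*mx < 0.  The sign is "true"
   (positive letter) iff the midpoint is NOT on the right-hand side. *)
Definition side_sign (P Q mx my : rat) : bool := 0 <= Q * my - P * mx.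

(* Each candidate edge is tested for meeting L in its relative interior;
   if it does, we return the parameter u in [0,1] of the intersection point
   (Q u, P u) on L, together with the contributed letter. *)

(* horizontal edge [(i,j),(i+1,j)] : intersection at height j *)
Definition hcand (P Q : rat) (i j : nat) : option (rat * letter) :=
  let u := j%:R / P in
  let X := Q * u in
  if (0 <= u <= 1) && (i%:R < X < i%:R + 1)
  then Some (u, (gx, side_sign P Q (i%:R + 1/2) j%:R)) else None.

(* vertical edge [(i,j),(i,j+1)] : intersection at abscissa i *)
Definition vcand (P Q : rat) (i j : nat) : option (rat * letter) :=
  let u := i%:R / Q in
  let Y := P * u in
  if (0 <= u <= 1) && (j%:R < Y < j%:R + 1)
  then Some (u, (gz, side_sign P Q i%:R (j%:R + 1/2))) else None.

(* diagonal edge [(i,j+1),(i+1,j)] : on the line X + Y = i + j + 1 *)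
Definition dcand (P Q : rat) (i j : nat) : option (rat * letter) :=
  let u := (i%:R + j%:R + 1) / (P + Q) in
  let X := Q * u in
  if (0 <= u <= 1) && (i%:R < X < i%:R + 1)
  then Some (u, (gy, side_sign P Q (i%:R + 1/2) (j%:R + 1/2))) else None.

(* Only edges with lower-left index
   (i,j) in [0,q]x[0,p] are enumerated: every edge whose relative interior
   meets L lies in the bounding box [0,q]x[0,p], so this loses nothing.
   The intersected edges are sorted along L by their parameter u (the
   relative interiors of distinct edges are disjoint, so u is injective). *)
Definition omega_pq (p q : nat) : word :=
  let P : rat := p%:R in
  let Q : rat := q%:R in
  let cs := pmap id (flatten [seq [:: hcand P Q i j; vcand P Q i j; dcand P Q i j]
                                | i <- iota 0 q.+1, j <- iota 0 p.+1]) in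
  map snd (sort (fun a b : rat * letter => a.1 <= b.1) cs).

(* t in Q_{>=0} \cup {oo}: None stands for oo = 1/0. *)
Definition omega (t : option rat) : word :=
  match t with
  | None => [:: (gz, true)]
  | Some r => if r == 0 then [:: (gx, true)]
              else omega_pq (absz (numq r)) (absz (denq r))
  end.

(* Let t = p/q with p, q > 0 coprime.  The half-turn about the centre
   (q/2, p/2) of L maps the modified lattice onto itself, preserving the kind of
   each edge, and maps L onto itself reversed, exchanging its two sides.  So the
   edges crossed by L, listed along L, are the reversed list of their images, and
   each letter is inverted, except at an edge whose midpoint lies on L.  By
   coprimality the only half-lattice point on L is its centre, so this happens
   only for the edge through the centre, which exists because p and q are not
   both even and which contributes a positive letter: omega_t = w a w^-1.
   Coprimality also makes distinct crossed edges meet L at distinct points, so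
   the sorting along L in [omega_pq] is strict. *)

From HB Require Import structures.
From mathcomp Require Import all_boot all_order all_algebra.
From mathcomp Require Import zify ring lra.
Import Order.TTheory GRing.Theory Num.Theory.

Set Implicit Arguments.
Unset Strict Implicit.
Unset Printing Implicit Defensive.

Definition gen_eqb (a b : gen) : bool :=
  match a, b with gx, gx | gy, gy | gz, gz => true | _, _ => false end.

Lemma gen_eqP : Equality.axiom gen_eqb.
Proof. by case; case; constructor. Qed.

HB.instance Definition _ := hasDecEq.Build gen gen_eqP.

Lemma coprime_half_lattice (p q x y : nat) : 0 < q -> coprime p q ->
  q * y = p * x -> x <= 2 * q -> odd x || odd y -> x = q /\ y = p.
Proof.
move=> q_gt0 co_pq e x_le odd_xy.
have /dvdnP[k xE] : q %| x.
  by rewrite -(@Gauss_dvdr q p) 1?coprime_sym // -e dvdn_mulr.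
have yE : y = k * p by apply/eqP; rewrite -(eqn_pmul2l q_gt0) e xE; apply/eqP; ring.
have k_le2 : k <= 2 by rewrite -(leq_pmul2r q_gt0) -xE.
move: odd_xy; rewrite xE yE.
by case: k k_le2 {xE yE} => [|[|[|k]]] //= _; rewrite ?mul1n ?oddM.
Qed.

Section SymmetricSequences.

Variables (T : eqType) (f : T -> T).
Hypothesis fK : involutive f.

Lemma sorted_eq_map_rev (lt : rel T) (s : seq T) :
  irreflexive lt -> transitive lt -> {homo f : x y / lt x y >-> lt y x} ->
  {in s, forall x, f x \in s} -> sorted lt s -> s = map f (rev s).
Proof.
move=> lt_irr lt_trans f_anti f_s s_sorted.
apply: (irr_sorted_eq lt_trans lt_irr) => //.
  by rewrite sorted_map rev_sorted; apply: sub_sorted s_sorted => x y /f_anti.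
move=> x; rewrite -[in RHS](fK x) (mem_map (inv_inj fK)) mem_rev.
by apply/idP/idP => /f_s; rewrite ?fK.
Qed.

Lemma split_at_fixed_point (s : seq T) (c : T) :
  uniq s -> s = map f (rev s) -> c \in s -> f c = c ->
  exists A, s = A ++ c :: map f (rev A).
Proof.
move=> + + c_s fc; case/splitPr: c_s => A B.
rewrite cat_uniq /= => /and3P[_ /norP[cA _] /andP[cB _]] s_sym.
have cB' : c \notin map f (rev B) by rewrite -[c]fc (mem_map (inv_inj fK)) mem_rev.
have index_c (A' B' : seq T) : c \notin A' -> index c (A' ++ c :: B') = size A'.
  by move=> cA'; rewrite index_cat (negbTE cA') /= eqxx addn0.
have {}s_sym : A ++ c :: B = map f (rev B) ++ c :: map f (rev A).
  by rewrite [LHS]s_sym rev_cat rev_cons map_cat map_rcons fc cat_rcons.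
have size_A : size A = size (map f (rev B)).
  by rewrite -(index_c A B cA) s_sym index_c.
move/eqP: s_sym; rewrite eqseq_cat // eqseq_cons eqxx => /andP[_ /eqP ->].
by exists A.
Qed.

End SymmetricSequences.

Lemma uniq_keys_pmap (I T K : eqType) (F : I -> option T) (k : T -> K) (s : seq I) :
  uniq s -> (forall e e' x y, F e = Some x -> F e' = Some y -> k x = k y -> e = e') ->
  uniq (map k (pmap id (map F s))).
Proof.
move=> + F_inj; elim: s => //= e s IH /andP[e_s s_uniq].
case Fe: (F e) => [x|] /=; rewrite IH // andbT.
apply/mapP => -[y]; rewrite mem_pmap map_id => /mapP[e' e'_s Fe'] kxy.
by move: e_s; rewrite (F_inj _ _ _ _ Fe (esym Fe') kxy) e'_s.
Qed.

Local Open Scope ring_scope.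

Definition param_le (x y : rat * letter) : bool := x.1 <= y.1.
Definition param_lt (x y : rat * letter) : bool := x.1 < y.1.

(* The half-turn about the centre of L acting on a crossing (parameter along L,
   letter); a midpoint on L, possible only at parameter 1/2, keeps its sign. *)
Definition half_turn (x : rat * letter) : rat * letter :=
  let: (u, (a, s)) := x in (1 - u, (a, if u == 1/2 then s else ~~ s)).

Lemma half_turnK : involutive half_turn.
Proof.
case=> u [a b]; rewrite /half_turn /=.
have -> : (1 - u == 1/2) = (u == 1/2) by apply/eqP/eqP => h; lra.
by case: eqP => [_|_]; rewrite /= ?negbK; congr (_, _); lra.
Qed.

Lemma half_turn_lt : {homo half_turn : x y / param_lt x y >-> param_lt y x}.
Proof. by move=> [u [a b]] [v [c d]]; rewrite /param_lt /= => ?; lra. Qed.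

Lemma half_turn_center (a : gen) : half_turn (1/2, (a, true)) = (1/2, (a, true)).
Proof. by rewrite /half_turn eqxx; congr (_, _); lra. Qed.

Lemma conjugate_word_of_symmetric (s : seq (rat * letter)) (a : gen) :
  sorted param_lt s -> s = map half_turn (rev s) -> (1/2, (a, true)) \in s ->
  exists w, map snd s = w ++ (a, true) :: inv_word w.
Proof.
move=> s_sorted s_sym c_s.
have lt_trans : transitive param_lt by move=> y x z; apply: lt_trans.
have s_uniq : uniq s by apply: sorted_uniq lt_trans _ _ s_sorted => x; apply: ltxx.
have [A sA] := split_at_fixed_point half_turnK s_uniq s_sym c_s (half_turn_center a).
have A_lt x : x \in A -> x.1 < 1/2.
  move=> xA; have : sorted param_lt [:: x; (1/2, (a, true))].
    apply: (subseq_sorted lt_trans _ s_sorted); rewrite sA -cat1s.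
    by apply: cat_subseq; rewrite sub1seq ?mem_head.
  by rewrite /= andbT.
exists (map snd A); rewrite sA map_cat /=; congr (_ ++ _ :: _).
rewrite /inv_word !map_rev -!map_comp; congr rev; apply/eq_in_map => x /A_lt /lt_eqF.
by case: x => u [b e]; rewrite /half_turn /inv_letter /= => ->.
Qed.

Lemma nat_between_eq (R : realDomainType) (i k : nat) (X : R) :
  i%:R < X -> X < i%:R + 1 -> k%:R < X -> X < k%:R + 1 -> i = k.
Proof.
move=> iX Xi kX Xk.
have : (i < k.+1)%N by rewrite -(ltr_nat R) -natr1 (lt_trans iX Xk).
have : (k < i.+1)%N by rewrite -(ltr_nat R) -natr1 (lt_trans kX Xi).
lia.
Qed.

Lemma no_nat_between (R : realDomainType) (i k : nat) :
  (i%:R : R) < k%:R -> (k%:R : R) < i%:R + 1 -> False.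
Proof. by rewrite natr1 !ltr_nat; lia. Qed.

Definition on_edge (a : gen) (i j : nat) (X Y : rat) : bool :=
  match a with
  | gx => (Y == j%:R) && (i%:R < X < i%:R + 1)
  | gz => (X == i%:R) && (j%:R < Y < j%:R + 1)
  | gy => (X + Y == i%:R + j%:R + 1) && (i%:R < X < i%:R + 1)
  end.

Definition edge_mid2 (a : gen) (i j : nat) : nat * nat :=
  match a with
  | gx => (2 * i + 1, 2 * j)%N
  | gz => (2 * i, 2 * j + 1)%N
  | gy => (2 * i + 1, 2 * j + 1)%N
  end.

Definition edge_mid (a : gen) (i j : nat) : rat * rat :=
  match a with
  | gx => (i%:R + 1/2, j%:R)
  | gz => (i%:R, j%:R + 1/2)
  | gy => (i%:R + 1/2, j%:R + 1/2)
  end.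

Lemma edge_mid_half a i j :
  edge_mid a i j = ((edge_mid2 a i j).1%:R / 2, (edge_mid2 a i j).2%:R / 2).
Proof.
by rewrite /edge_mid /edge_mid2; case: a => /=; congr (_, _); lra.
Qed.

Lemma odd_edge_mid2 a i j : odd (edge_mid2 a i j).1 || odd (edge_mid2 a i j).2.
Proof. by case: a; rewrite /= ?addn1 /= !mul2n !odd_double ?orbT. Qed.

Lemma on_edge_mid a i j : on_edge a i j (edge_mid a i j).1 (edge_mid a i j).2.
Proof.
rewrite /on_edge /edge_mid; case: a => /=;
  by apply/andP; split; [apply/eqP | apply/andP; split]; lra.
Qed.

Lemma on_edge_inj a b i j i' j' X Y :
  on_edge a i j X Y -> on_edge b i' j' X Y -> (a, i, j) = (b, i', j').
Proof.
have nat_inj (m n : nat) : m%:R = n%:R :> rat -> m = n.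
  by move/eqP; rewrite eqr_nat => /eqP.
case: a; case: b => /= /andP[/eqP e /andP[lo hi]] /andP[/eqP e' /andP[lo' hi']].
- by rewrite (nat_between_eq lo hi lo' hi') (nat_inj j j') // -e -e'.
- exfalso; apply: (@no_nat_between _ (i + j) (i' + j').+1); rewrite -natr1 !natrD; lra.
- by exfalso; apply: (@no_nat_between _ i i'); lra.
- exfalso; apply: (@no_nat_between _ (i' + j') (i + j).+1); rewrite -natr1 !natrD; lra.
- have ii' := nat_between_eq lo hi lo' hi'; subst i'.
  by rewrite (nat_inj j j') //; lra.
- by exfalso; apply: (@no_nat_between _ i i'); lra.
- by exfalso; apply: (@no_nat_between _ i' i); lra.
- by exfalso; apply: (@no_nat_between _ i' i); lra.
- by rewrite (nat_inj i i') -?e -?e' // (nat_between_eq lo hi lo' hi').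
Qed.

Lemma edge_mid2_le a i j X Y (m n : nat) :
  on_edge a i j X Y -> X <= m%:R -> Y <= n%:R ->
  ((edge_mid2 a i j).1 <= 2 * m)%N && ((edge_mid2 a i j).2 <= 2 * n)%N.
Proof.
case: a => /= /andP[/eqP e /andP[lo hi]] Xm Yn.
- have : (i < m)%N by rewrite -(ltr_nat rat); lra.
  have : (j <= n)%N by rewrite -(ler_nat rat); lra.
  lia.
- have : (i < m)%N by rewrite -(ltr_nat rat); lra.
  have : (j < n)%N by rewrite -(ltr_nat rat); lra.
  lia.
- have : (i <= m)%N by rewrite -(ler_nat rat); lra.
  have : (j < n)%N by rewrite -(ltr_nat rat); lra.
  lia.
Qed.

Lemma on_edge_reflect a i j (m n : nat) X Y :
  on_edge a i j X Y -> X <= m%:R -> Y <= n%:R ->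
  exists i' j', on_edge a i' j' (m%:R - X) (n%:R - Y) /\
    edge_mid a i' j' = (m%:R - (edge_mid a i j).1, n%:R - (edge_mid a i j).2).
Proof.
move=> e Xm Yn; have := edge_mid2_le e Xm Yn; move: e.
case: a; rewrite /on_edge /edge_mid /edge_mid2 => /andP[/eqP e /andP[lo hi]] /= bounds.
- have /andP[im jn] : (i < m)%N && (j <= n)%N by lia.
  exists (m - i.+1)%N, (n - j)%N.
  rewrite !natrB //.
  by split; [apply/andP; split; [apply/eqP | apply/andP; split] | congr (_, _)]; lra.
- have /andP[im jn] : (i < m)%N && (j < n)%N by lia.
  exists (m - i.+1)%N, (n - j.+1)%N.
  rewrite !natrB //.
  by split; [apply/andP; split; [apply/eqP | apply/andP; split] | congr (_, _)]; lra.
- have /andP[im jn] : (i <= m)%N && (j < n)%N by lia.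
  exists (m - i)%N, (n - j.+1)%N.
  rewrite !natrB //.
  by split; [apply/andP; split; [apply/eqP | apply/andP; split] | congr (_, _)]; lra.
Qed.

Lemma side_sign_reflect (P Q mx my : rat) :
  side_sign P Q (Q - mx) (P - my) = (Q * my == P * mx) || ~~ side_sign P Q mx my.
Proof.
rewrite /side_sign -ltNge.
have -> : Q * (P - my) - P * (Q - mx) = - (Q * my - P * mx) by ring.
by rewrite oppr_ge0 le_eqVlt subr_eq0.
Qed.

Lemma center_edge (m n : nat) : odd m || odd n -> exists a i j, edge_mid2 a i j = (m, n).
Proof.
move=> odd_mn; have := odd_double_half m; have := odd_double_half n.
rewrite /edge_mid2; case: (odd m) (odd n) odd_mn => -[] //= hn hm.
- by exists gy, m./2, n./2; congr pair; lia.
- by exists gx, m./2, n./2; congr pair; lia.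
- by exists gz, m./2, n./2; congr pair; lia.
Qed.

Section Crossings.

Variables p q : nat.
Hypotheses (p_gt0 : (0 < p)%N) (q_gt0 : (0 < q)%N) (coprime_pq : coprime p q).

Local Notation P := (p%:R : rat).
Local Notation Q := (q%:R : rat).

Definition cand (a : gen) : nat -> nat -> option (rat * letter) :=
  match a with gx => hcand P Q | gz => vcand P Q | gy => dcand P Q end.

Definition edge_sign (a : gen) (i j : nat) : bool :=
  side_sign P Q (edge_mid a i j).1 (edge_mid a i j).2.

Lemma candP a i j u l :
  cand a i j = Some (u, l) <->
  [/\ 0 <= u <= 1, on_edge a i j (Q * u) (P * u) & l = (a, edge_sign a i j)].
Proof.
have P_neq0 : P != 0 by rewrite pnatr_eq0 -lt0n.
have Q_neq0 : Q != 0 by rewrite pnatr_eq0 -lt0n.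
have PQ_neq0 : P + Q != 0 by rewrite -natrD pnatr_eq0 addn_eq0 negb_and -!lt0n p_gt0.
rewrite /cand /edge_sign /edge_mid /on_edge; case: a.
- rewrite /hcand; split.
    case: ifP => // /andP[u01 hX] [<- <-]; split => //.
    by rewrite [P * _]mulrC divfK // eqxx.
  case=> u01 /andP[/eqP Pu hX] ->.
  have uE : j%:R / P = u by rewrite -Pu [P * u]mulrC mulfK.
  by rewrite uE u01 hX.
- rewrite /dcand; split.
    case: ifP => // /andP[u01 hX] [<- <-]; split => //.
    by rewrite -mulrDl addrC [_ * _]mulrC divfK // eqxx.
  case=> u01 /andP[/eqP e hX] ->.
  have uE : (i%:R + j%:R + 1) / (P + Q) = u.
    by rewrite -e -mulrDl addrC [(P + Q) * u]mulrC mulfK.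
  by rewrite uE u01 hX.
- rewrite /vcand; split.
    case: ifP => // /andP[u01 hY] [<- <-]; split => //.
    by rewrite [Q * _]mulrC divfK // eqxx.
  case=> u01 /andP[/eqP Qu hY] ->.
  have uE : i%:R / Q = u by rewrite -Qu [Q * u]mulrC mulfK.
  by rewrite uE u01 hY.
Qed.

Lemma param_point_le u : u <= 1 -> Q * u <= Q /\ P * u <= P.
Proof. by move=> u1; split; apply: ler_piMr. Qed.

Lemma edge_mid_on_L_param a i j u : 0 <= u <= 1 -> on_edge a i j (Q * u) (P * u) ->
  Q * (edge_mid a i j).2 = P * (edge_mid a i j).1 -> u = 1/2.
Proof.
move=> /andP[_ u1] e; have [Qu Pu] := param_point_le u1.
have := edge_mid2_le e Qu Pu; have := odd_edge_mid2 a i j; rewrite edge_mid_half.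
case E: (edge_mid2 a i j) => [x y] /= odd_xy /andP[x_le _] on_line.
have qy_px : (q * y = p * x)%N by apply/eqP; rewrite -(eqr_nat rat); apply/eqP; lra.
have [xq yp] := coprime_half_lattice q_gt0 coprime_pq qy_px x_le odd_xy.
move: E e; rewrite /edge_mid2 /on_edge xq yp; case: a => -[qE pE] /andP[/eqP e _].
- have j_neq0 : j%:R != 0 :> rat by rewrite pnatr_eq0 -lt0n; lia.
  by apply: (mulfI j_neq0); rewrite -pE in e; lra.
- have ij_neq0 : i%:R + j%:R + 1 != 0 :> rat by rewrite -natrD natr1 pnatr_eq0.
  by apply: (mulfI ij_neq0); rewrite -pE -qE in e; lra.
- have i_neq0 : i%:R != 0 :> rat by rewrite pnatr_eq0 -lt0n; lia.
  by apply: (mulfI i_neq0); rewrite -qE in e; lra.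
Qed.

Lemma cand_param_inj a b i j i' j' x y :
  cand a i j = Some x -> cand b i' j' = Some y -> x.1 = y.1 -> (a, i, j) = (b, i', j').
Proof.
case: x => u l /candP[_ e _]; case: y => v l' /candP[_ e' _] /= uv.
by apply: on_edge_inj e _; rewrite uv.
Qed.

Lemma cand_index_le a i j x : cand a i j = Some x -> (i <= q)%N && (j <= p)%N.
Proof.
case: x => u l /candP[/andP[_ u1] e _]; have [Qu Pu] := param_point_le u1.
by move: (edge_mid2_le e Qu Pu); case: a {e}; rewrite /edge_mid2 /=; lia.
Qed.

Definition edges : seq (gen * nat * nat) :=
  [seq (a, ij.1, ij.2) | ij <- [seq (i, j) | i <- iota 0 q.+1, j <- iota 0 p.+1],
                         a <- [:: gx; gz; gy]].

Definition crossings : seq (rat * letter) :=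
  pmap id [seq cand e.1.1 e.1.2 e.2 | e <- edges].

Lemma omega_pqE : omega_pq p q = map snd (sort param_le crossings).
Proof. by rewrite /crossings /edges !map_allpairs. Qed.

Lemma uniq_edges : uniq edges.
Proof.
rewrite !allpairs_uniq ?iota_uniq //.
  by move=> [? ?] [? ?] _ _ [-> ->].
by move=> [[? ?] ?] [[? ?] ?] _ _ [-> -> ->].
Qed.

Lemma mem_crossings x : x \in crossings <-> exists a i j, cand a i j = Some x.
Proof.
rewrite mem_pmap map_id; split.
  by case/mapP => -[[a i] j] _ ->; exists a, i, j.
case=> a [i [j c]]; apply/mapP; exists (a, i, j); last by rewrite c.
have /andP[i_le j_le] := cand_index_le c.
apply/allpairsP; exists ((i, j), a); split => //; last by case: a {c}.
by apply/allpairsP; exists (i, j); rewrite !mem_iota.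
Qed.

Lemma sorted_crossings : sorted param_lt (sort param_le crossings).
Proof.
have keys_uniq : uniq (map fst crossings).
  apply: uniq_keys_pmap uniq_edges _ => -[[a i] j] [[b i'] j'] x y /= cx cy.
  exact: cand_param_inj cx cy.
have perm_s : perm_eq (sort param_le crossings) crossings by rewrite perm_sort perm_refl.
have : sorted <%R (map fst (sort param_le crossings)).
  rewrite lt_sorted_uniq_le (perm_uniq (perm_map _ perm_s)) keys_uniq sorted_map.
  by apply: sort_sorted => x y; apply: le_total.
by rewrite sorted_map.
Qed.

Lemma half_turn_crossing x : x \in crossings -> half_turn x \in crossings.
Proof.
case/mem_crossings => a [i [j]]; case: x => u l c.
have [u01 e l_eq] := iffLR (candP a i j u l) c.
apply/mem_crossings; rewrite l_eq /half_turn.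
have [u_half|u_neq] := eqVneq u (1/2).
  by exists a, i, j; rewrite c l_eq u_half; congr (Some (_, _)); lra.
have /andP[u0 u1] := u01; have [Qu Pu] := param_point_le u1.
have [i' [j' [e' mid']]] := on_edge_reflect e Qu Pu.
exists a, i', j'; apply/candP; split.
- by apply/andP; split; lra.
- by rewrite !mulrBr !mulr1.
- have off_line := contra_neq (edge_mid_on_L_param u01 e) u_neq.
  by rewrite /edge_sign mid' side_sign_reflect (negbTE off_line).
Qed.

Lemma crossings_symmetric :
  sort param_le crossings = map half_turn (rev (sort param_le crossings)).
Proof.
apply: (sorted_eq_map_rev half_turnK _ _ half_turn_lt) sorted_crossings.
- by move=> x; apply: ltxx.
- by move=> y x z; apply: lt_trans.
- by move=> x; rewrite !mem_sort; apply: half_turn_crossing.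
Qed.

Lemma center_crossing : exists a, (1/2, (a, true)) \in crossings.
Proof.
have odd_qp : odd q || odd p.
  have coprime_qp : coprime q p by rewrite coprime_sym.
  case: (boolP (odd q)) => //= even_q.
  by rewrite -coprime2n (coprime_dvdl _ coprime_qp) ?dvdn2.
have [a [i [j mid]]] := center_edge odd_qp.
exists a; apply/mem_crossings; exists a, i, j; apply/candP; split.
- by apply/andP; split; lra.
- by have := on_edge_mid a i j; rewrite edge_mid_half mid /= !mul1r.
- by rewrite /edge_sign edge_mid_half mid /side_sign /= mulrCA subrr lexx.
Qed.

Lemma omega_pq_conjugate : exists w a, omega_pq p q = w ++ (a, true) :: inv_word w.
Proof.
have [a c_in] := center_crossing.
have c_in_sorted : (1/2, (a, true)) \in sort param_le crossings by rewrite mem_sort.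
have [w w_eq] :=
  conjugate_word_of_symmetric sorted_crossings crossings_symmetric c_in_sorted.
by exists w, a; rewrite omega_pqE.
Qed.

End Crossings.

Theorem proposition3p4 (t : option rat)
  (ht : if t is Some r then 0 <= r else true) :
  exists (w : word) (a : gen), omega t = w ++ (a, true) :: inv_word w.
Proof.
case: t ht => [r|] /=; last by exists [::], gz.
case: eqP => [_ _|r_neq0 _]; first by exists [::], gx.
apply: omega_pq_conjugate.
- by rewrite absz_gt0 numq_eq0; apply/eqP.
- by rewrite absz_gt0 denq_neq0.
- exact: coprime_num_den.
Qed.
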